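(* Let $A$ be a Banach algebra, $(\pi_1,X,\pi_2)$ a Banach $A$-module and $D:A\to X^*$ a derivation. Then for all $a^{**},b^{**}\in A^{**}$: (i) $D^{**}(a^{**}\Box b^{**})=\pi_1^{****}(D^{**}(a^{**}),b^{**})+\pi_2^{r*r***}(a^{**},D^{**}(b^{**}))$; (ii) $D^{**}(a^{**}\lozenge b^{**})=\pi_1^{*r***r}(D^{**}(a^{**}),b^{**})+\pi_2^{r****r}(a^{**},D^{**}(b^{**}))$.
   Context: Normed spaces are identified with their canonical images in their second duals. For a bounded bilinear map $f:X\times Y\to Z$, the adjoint $f^*:Z^*\times X\to Y^*$ is defined by $\langle f^*(z^*,x),y\rangle=\langle z^*,f(x,y)\rangle$; iterating gives $f^{**}:Y^{**}\times Z^*\to X^*$, $f^{***}:X^{**}\times Y^{**}\to Z^{**}$, $f^{****}:Z^{***}\times X^{**}\to Y^{***}$, etc. The flip is $f^r(y,x)=f(x,y)$; superscripts are applied successively left to right (e.g. $\pi_2^{r*r***}$: flip $\pi_2$, adjoint, flip, three adjoints; $\pi_1^{*r***r}$: adjoint, flip, three adjoints, flip). For the multiplication $\pi$ of $A$, the Arens products on $A^{**}$ are $a^{**}\Box b^{**}=\pi^{***}(a^{**},b^{**})$ and $a^{**}\lozenge b^{**}=\pi^{r***r}(a^{**},b^{**})$. A Banach $A$-module $(\pi_1,X,\pi_2)$ consists of a Banach space $X$ and bounded bilinear maps $\pi_1:A\times X\to X$, $\pi_2:X\times A\to X$ with $\pi_1(ab,x)=\pi_1(a,\pi_1(b,x))$,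 $\pi_2(x,ab)=\pi_2(\pi_2(x,a),b)$, $\pi_1(a,\pi_2(x,b))=\pi_2(\pi_1(a,x),b)$. A derivation $D:A\to X^*$ is a bounded linear map with $D(ab)=\pi_1^*(D(a),b)+\pi_2^{r*r}(a,D(b))$ for all $a,b\in A$ (here $\pi_1^*:X^*\times A\to X^*$ and $\pi_2^{r*r}:A\times X^*\to X^*$ are the dual module actions). $D^{**}:A^{**}\to X^{***}$ is the second adjoint of $D$. *)

From HB Require Import structures.
From mathcomp Require Import all_boot all_order all_algebra.
From mathcomp Require Import all_classical all_reals.
From mathcomp Require Import topology normedtype.
Set Implicit Arguments. Unset Strict Implicit. Unset Printing Implicit Defensive.
Import Order.TTheory GRing.Theory Num.Theory.
Import numFieldNormedType.Exports.
Local Open Scope ring_scope.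

(* A "space" is a carrier type together with the set of its genuine         *)
(* elements [mem], the linear-combination relation [comb c u v w]           *)
(* ("w = c u + v") and the norm-bound relation [bnd u r] ("||u|| <= r").     *)
(* The dual of a space S has carrier [spt S -> K]; its genuine elements are   *)
(* the bounded linear functionals on the genuine elements of S, with the     *)
(* operator-norm bound relation:  ||f|| <= r  iff  |f u| <= r d whenever     *)
(* ||u|| <= d.  Two dual elements are identified when they agree on all      *)
(* genuine elements of S.                                                    *)

Record space (K : numFieldType) := Space {
  spt : Type;
  smem : spt -> Prop;
  scomb : K -> spt -> spt -> spt -> Prop;
  sbnd : spt -> K -> Prop }.

Definition nspace (K : numFieldType) (V : normedModType K) : space K :=
  @Space K V (fun _ => True) (fun c u v w => w = c *: u + v)
    (fun u r => `|u| <= r).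

Definition is_dual_elt (K : numFieldType) (S : space K) (f : spt S -> K) :=
  (forall c u v w, smem u -> smem v -> smem w -> scomb c u v w ->
      f w = c * f u + f v) /\
  (exists M : K, forall u r, smem u -> sbnd u r -> `|f u| <= M * r).

Definition dual (K : numFieldType) (S : space K) : space K :=
  @Space K (spt S -> K) (@is_dual_elt K S)
    (fun c f g h => forall u, smem u -> h u = c * f u + g u)
    (fun f r => forall u d, smem u -> sbnd u d -> `|f u| <= r * d).

Definition adj (K P Q R : Type) (f : P -> Q -> R) : (R -> K) -> P -> (Q -> K) :=
  fun z x y => z (f x y).

Definition flip (P Q R : Type) (f : P -> Q -> R) : Q -> P -> R :=
  fun y x => f x y.

Definition ladj (K U V : Type) (T : U -> V) : (V -> K) -> (U -> K) :=
  fun g u => g (T u).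

Definition bounded_bilinear (K : numFieldType) (U V W : normedModType K)
    (f : U -> V -> W) :=
  (forall u c v v', f u (c *: v + v') = c *: f u v + f u v') /\
  (forall v c u u', f (c *: u + u') v = c *: f u v + f u' v) /\
  (exists M : K, forall u v, `|f u v| <= M * `|u| * `|v|).

Definition banach_algebra (K : numFieldType) (A : completeNormedModType K)
    (pi : A -> A -> A) :=
  bounded_bilinear pi /\
  (forall a b c, pi (pi a b) c = pi a (pi b c)) /\
  (forall a b, `|pi a b| <= `|a| * `|b|).

Definition banach_module (K : numFieldType) (A : completeNormedModType K)
    (pi : A -> A -> A) (X : completeNormedModType K)
    (pi1 : A -> X -> X) (pi2 : X -> A -> X) :=
  bounded_bilinear pi1 /\ bounded_bilinear pi2 /\
  (forall a b x, pi1 (pi a b) x = pi1 a (pi1 b x)) /\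
  (forall a b x, pi2 x (pi a b) = pi2 (pi2 x a) b) /\
  (forall a b x, pi1 a (pi2 x b) = pi2 (pi1 a x) b).

Definition derivation (K : numFieldType) (A : completeNormedModType K)
    (pi : A -> A -> A) (X : completeNormedModType K)
    (pi1 : A -> X -> X) (pi2 : X -> A -> X) (D : A -> (X -> K)) :=
  (forall a, @smem K (dual (nspace X)) (D a)) /\
  (forall c a b x, D (c *: a + b) x = c * D a x + D b x) /\
  (exists M : K, forall a, @sbnd K (dual (nspace X)) (D a) (M * `|a|)) /\
  (forall a b x, D (pi a b) x =
      adj pi1 (D a) b x + flip (adj (flip pi2)) a (D b) x).

Definition arens_box (K : numFieldType) (A : Type) (pi : A -> A -> A) :=
  adj (K := K) (adj (K := K) (adj (K := K) pi)).
Definition arens_loz (K : numFieldType) (A : Type) (pi : A -> A -> A) :=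
  flip (adj (K := K) (adj (K := K) (adj (K := K) (flip pi)))).

From HB Require Import structures.
From mathcomp Require Import all_boot all_order all_algebra.
From mathcomp Require Import all_classical all_reals.
From mathcomp Require Import topology normedtype.
From mathcomp Require Import ring.
Import Order.TTheory GRing.Theory Num.Theory.
Import numFieldNormedType.Exports.
Set Implicit Arguments. Unset Strict Implicit. Unset Printing Implicit Defensive.
Local Open Scope ring_scope.

(* Evaluated on F in X^{***}, both identities are instances of one fact: for
   bidual elements P, Q and bounded trilinear forms S1, S2 with S = S1 + S2,
   P (u |-> Q (v |-> F (S u v))) splits as the corresponding sum.  Additivity
   of a bidual element only holds between bounded functionals, so all the
   work is in showing that every partially evaluated form is bounded linear.
   With S x y w = D(xy)(w), the derivation rule provides the splitting into
   S1 x y w = D x (pi1 y w) and S2 x y w = D y (pi2 w x); (i) takes P = a,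
   Q = b, and (ii) takes P = b, Q = a with the first two arguments swapped. *)

(* K is only partially ordered, so [M <= `|M|] is not available. *)
Lemma ler_norm_coef (K : numFieldType) (t M p : K) :
  `|t| <= M * p -> 0 <= p -> `|t| <= `|M| * p.
Proof.
move=> le_tMp p_ge0; have Mp_ge0 : 0 <= M * p by exact: le_trans le_tMp.
by rewrite (le_trans le_tMp) // -{1}(ger0_norm Mp_ge0) normrM (ger0_norm p_ge0).
Qed.

Section Forms.
Variable K : numFieldType.

Definition linear_form (V : normedModType K) (f : V -> K) :=
  forall c u v, f (c *: u + v) = c * f u + f v.

Definition bounded_linear_form (V : normedModType K) (f : V -> K) :=
  @smem K (dual (nspace V)) f.

Definition bidual_elt (V : normedModType K) (P : (V -> K) -> K) :=
  @smem K (dual (dual (nspace V))) P.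

Definition bounded_bilinear_form (V W : normedModType K) (T : V -> W -> K) :=
  [/\ forall w, linear_form (T^~ w), forall v, linear_form (T v) &
      exists M, forall v w, `|T v w| <= M * `|v| * `|w|].

Definition bounded_trilinear_form (U V W : normedModType K)
    (S : U -> V -> W -> K) :=
  [/\ forall y w, linear_form (fun x => S x y w),
      forall x w, linear_form (fun y => S x y w),
      forall x y, linear_form (S x y) &
      exists M, forall x y w, `|S x y w| <= M * `|x| * `|y| * `|w|].

Lemma bounded_linear_formP (V : normedModType K) (f : V -> K) :
  bounded_linear_form f <->
  linear_form f /\ exists M, forall u, `|f u| <= M * `|u|.
Proof.
split=> [[f_lin [M f_bnd]] | [f_lin [M f_bnd]]]; split.
- by move=> c u v; exact: (f_lin c u v (c *: u + v) I I I erefl).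
- by exists M => u; exact: (f_bnd u `|u| I (lexx _)).
- by move=> c u v w _ _ _ /= ->; exact: f_lin.
exists `|M| => u r _ /= le_ur.
apply: le_trans (ler_norm_coef (f_bnd u) (normr_ge0 _)) _.
by rewrite ler_wpM2l.
Qed.

Lemma bilinear_form_apply (V W : normedModType K) (T : V -> W -> K) v :
  bounded_bilinear_form T -> bounded_linear_form (T v).
Proof.
case=> _ T_lin [M T_bnd]; apply/bounded_linear_formP; split=> //.
by exists (M * `|v|) => w; exact: T_bnd.
Qed.

Lemma trilinear_form_apply (U V W : normedModType K) (S : U -> V -> W -> K)
    x y : bounded_trilinear_form S -> bounded_linear_form (S x y).
Proof.
case=> _ _ S_lin [M S_bnd]; apply/bounded_linear_formP; split=> //.
by exists (M * `|x| * `|y|) => w; exact: S_bnd.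
Qed.

Lemma trilinear_form_swap (U V W : normedModType K) (S : U -> V -> W -> K) :
  bounded_trilinear_form S -> bounded_trilinear_form (fun y x => S x y).
Proof.
case=> S_lin1 S_lin2 S_lin3 [M S_bnd]; split=> //.
by exists M => y x w; rewrite (mulrAC M); exact: S_bnd.
Qed.

Section Bidual.
Variables (V : normedModType K) (P : (V -> K) -> K).
Hypothesis P_bidual : bidual_elt P.

Lemma bidual_linear c g1 g2 h :
  bounded_linear_form g1 -> bounded_linear_form g2 -> bounded_linear_form h ->
  (forall w, h w = c * g1 w + g2 w) -> P h = c * P g1 + P g2.
Proof.
by case: P_bidual => P_lin _ g1_bl g2_bl h_bl hE; apply: P_lin => // u _.
Qed.

Lemma bidualD g1 g2 h :
  bounded_linear_form g1 -> bounded_linear_form g2 ->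
  (forall w, h w = g1 w + g2 w) -> P h = P g1 + P g2.
Proof.
move=> g1_bl g2_bl hE.
have [g1_lin [M1 g1_bnd]] := (bounded_linear_formP g1).1 g1_bl.
have [g2_lin [M2 g2_bnd]] := (bounded_linear_formP g2).1 g2_bl.
have h_bl : bounded_linear_form h.
  apply/bounded_linear_formP; split.
    by move=> c u v; rewrite !hE g1_lin g2_lin; ring.
  exists (M1 + M2) => u; rewrite hE mulrDl.
  by apply: le_trans (ler_normD _ _) _; apply: lerD.
by rewrite -[P g1]mul1r; apply: bidual_linear => // w; rewrite mul1r.
Qed.

Lemma bidual_bounded : exists M, forall g C,
  bounded_linear_form g -> 0 <= C -> (forall w, `|g w| <= C * `|w|) ->
  `|P g| <= M * C.
Proof.
case: P_bidual => _ [M P_bnd]; exists M => g C g_bl C_ge0 g_bnd.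
apply: P_bnd => // w d _ /= le_wd.
by apply: le_trans (g_bnd w) _; exact: ler_wpM2l.
Qed.

Lemma bidual_comp_bilinear (U : normedModType K) (T : U -> V -> K) :
  bounded_bilinear_form T -> bounded_linear_form (fun u => P (T u)).
Proof.
move=> T_bb; have T_apply u := bilinear_form_apply u T_bb.
case: T_bb => T_lin _ [M T_bnd]; have [MP P_bnd] := bidual_bounded.
apply/bounded_linear_formP; split.
  by move=> c u v; apply: bidual_linear => // w; exact: T_lin.
exists (MP * `|M|) => u; rewrite -mulrA; apply: P_bnd => //.
  by rewrite mulr_ge0.
move=> w; rewrite -mulrA; apply: ler_norm_coef; first by rewrite mulrA.
by rewrite mulr_ge0.
Qed.

Lemma bidual_comp_trilinear (U1 U2 : normedModType K)
    (S : U1 -> U2 -> V -> K) :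
  bounded_trilinear_form S -> bounded_bilinear_form (fun x y => P (S x y)).
Proof.
move=> S_bt; have S_apply x y := trilinear_form_apply x y S_bt.
case: S_bt => S_lin1 S_lin2 _ [M S_bnd]; have [MP P_bnd] := bidual_bounded.
split.
- by move=> y c u v; apply: bidual_linear => // w; exact: S_lin1.
- by move=> x c u v; apply: bidual_linear => // w; exact: S_lin2.
exists (MP * `|M|) => x y; rewrite -!mulrA; apply: P_bnd => //.
  by rewrite !mulr_ge0.
move=> w; rewrite !mulrA -!(mulrA `|M|) -mulrA.
apply: ler_norm_coef; first by rewrite !mulrA.
by rewrite !mulr_ge0.
Qed.

End Bidual.

Lemma bidual_nestedD (U1 U2 V : normedModType K)
    (P : (U1 -> K) -> K) (Q : (U2 -> K) -> K) (F : (V -> K) -> K)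
    (S S1 S2 : U1 -> U2 -> V -> K) :
  bidual_elt P -> bidual_elt Q -> bidual_elt F ->
  bounded_trilinear_form S1 -> bounded_trilinear_form S2 ->
  (forall x y w, S x y w = S1 x y w + S2 x y w) ->
  P (fun x => Q (fun y => F (S x y))) =
  P (fun x => Q (fun y => F (S1 x y))) + P (fun x => Q (fun y => F (S2 x y))).
Proof.
move=> P_bd Q_bd F_bd S1_bt S2_bt SE.
have FS1_bb := bidual_comp_trilinear F_bd S1_bt.
have FS2_bb := bidual_comp_trilinear F_bd S2_bt.
apply: (bidualD P_bd (bidual_comp_bilinear Q_bd FS1_bb)
                     (bidual_comp_bilinear Q_bd FS2_bb)) => x.
apply: (bidualD Q_bd (bilinear_form_apply x FS1_bb)
                     (bilinear_form_apply x FS2_bb)) => y.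
exact: (bidualD F_bd (trilinear_form_apply x y S1_bt)
                     (trilinear_form_apply x y S2_bt)).
Qed.

End Forms.

Section DerivationForms.
Variables (K : numFieldType) (A X : completeNormedModType K).
Variables (pi : A -> A -> A) (pi1 : A -> X -> X) (pi2 : X -> A -> X).
Variable D : A -> (X -> K).
Hypothesis D_der : derivation pi pi1 pi2 D.

Let D_linear x : linear_form (D x).
Proof. by case: D_der => D_bl _; case/bounded_linear_formP: (D_bl x). Qed.

Lemma derivation_left_trilinear :
  bounded_bilinear pi1 -> bounded_trilinear_form (fun x y w => D x (pi1 y w)).
Proof.
case=> pi1_linr [pi1_linl [M1 pi1_bnd]].
case: D_der => _ [D_lin [[MD D_bnd] _]]; split.
- by move=> y w c u v; exact: D_lin.
- by move=> x w c u v /=; rewrite pi1_linl D_linear.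
- by move=> x y c u v /=; rewrite pi1_linr D_linear.
exists (MD * M1) => x y w.
have := D_bnd x (pi1 y w) (M1 * `|y| * `|w|) I (pi1_bnd y w).
by congr (_ <= _); ring.
Qed.

Lemma derivation_right_trilinear :
  bounded_bilinear pi2 -> bounded_trilinear_form (fun x y w => D y (pi2 w x)).
Proof.
case=> pi2_linr [pi2_linl [M2 pi2_bnd]].
case: D_der => _ [D_lin [[MD D_bnd] _]]; split.
- by move=> y w c u v /=; rewrite pi2_linr D_linear.
- by move=> x w c u v; exact: D_lin.
- by move=> x y c u v /=; rewrite pi2_linl D_linear.
exists (MD * M2) => x y w.
have := D_bnd y (pi2 w x) (M2 * `|w| * `|x|) I (pi2_bnd w x).
by congr (_ <= _); ring.
Qed.

End DerivationForms.

Theorem lemma4p1 (K : numFieldType) (A : completeNormedModType K)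
  (pi : A -> A -> A) (X : completeNormedModType K)
  (pi1 : A -> X -> X) (pi2 : X -> A -> X) (D : A -> (X -> K)) :
  banach_algebra pi ->
  banach_module pi pi1 pi2 ->
  derivation pi pi1 pi2 D ->
  forall (a b : (A -> K) -> K),
    @smem K (dual (dual (nspace A))) a ->
    @smem K (dual (dual (nspace A))) b ->
    (* (i) *)
    (forall F : (X -> K) -> K, @smem K (dual (dual (nspace X))) F ->
       ladj (ladj D) (arens_box (K := K) pi a b) F =
         adj (K := K) (adj (K := K) (adj (K := K) (adj (K := K) pi1)))
           (ladj (ladj D) a) b F
       + adj (K := K) (adj (K := K) (adj (K := K)
           (flip (adj (K := K) (flip pi2))))) a (ladj (ladj D) b) F) /\
    (* (ii) *)
    (forall F : (X -> K) -> K, @smem K (dual (dual (nspace X))) F ->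
       ladj (ladj D) (arens_loz (K := K) pi a b) F =
         flip (adj (K := K) (adj (K := K) (adj (K := K)
           (flip (adj (K := K) pi1))))) (ladj (ladj D) a) b F
       + flip (adj (K := K) (adj (K := K) (adj (K := K) (adj (K := K)
           (flip pi2))))) a (ladj (ladj D) b) F).
Proof.
move=> _ [pi1_bb [pi2_bb _]] D_der a b a_bd b_bd.
have S1_bt := derivation_left_trilinear D_der pi1_bb.
have S2_bt := derivation_right_trilinear D_der pi2_bb.
have D_rule x y w : D (pi x y) w = D x (pi1 y w) + D y (pi2 w x).
  by case: D_der => _ [_ [_ D_rule]]; exact: D_rule.
split=> F F_bd; rewrite /ladj /arens_box /arens_loz /adj /flip /=.
  by have := bidual_nestedD (S := fun x y => D (pi x y)) a_bd b_bd F_bd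
    S1_bt S2_bt D_rule.
have := bidual_nestedD (S := fun y x => D (pi x y)) b_bd a_bd F_bd
  (trilinear_form_swap S1_bt) (trilinear_form_swap S2_bt).
by apply=> y x w; exact: D_rule.
Qed.
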